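(* If $\tau\in\mathcal{L}$ and $C(\tau)$ is a meager subset of the Euclidean space $\mathbb{R}$, then $(\mathbb{R},\tau)$ is a Baire space.
   Context: $\eta$ denotes the Euclidean topology on $\mathbb{R}$. $\mathcal{L}$ denotes the family of all Hausdorff topologies $\tau$ on $\mathbb{R}$ with $\tau\subset\eta$. For $\tau\in\mathcal{L}$ and $a\in\mathbb{R}$ let $\mathcal{N}_\tau(a)$ be the neighborhood filter of $a$ in $(\mathbb{R},\tau)$; $C(\tau)$ is the set of all $a\in\mathbb{R}$ with $\mathcal{N}_\tau(a)\neq\mathcal{N}_\eta(a)$. *)

From Stdlib Require Import Reals Rtopology.
Open Scope R_scope.

Definition is_topology (tau : (R -> Prop) -> Prop) : Prop :=
  tau (fun _ => False) /\ tau (fun _ => True) /\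
  (forall (F : (R -> Prop) -> Prop),
      (forall U, F U -> tau U) -> tau (fun x => exists U, F U /\ U x)) /\
  (forall U V, tau U -> tau V -> tau (fun x => U x /\ V x)).

Definition hausdorff (tau : (R -> Prop) -> Prop) : Prop :=
  forall x y, x <> y -> exists U V, tau U /\ tau V /\ U x /\ V y /\
    (forall z, ~ (U z /\ V z)).

Definition eta (U : R -> Prop) : Prop := open_set U.

Definition in_L (tau : (R -> Prop) -> Prop) : Prop :=
  is_topology tau /\ hausdorff tau /\ (forall U, tau U -> eta U).

Definition nbhd_filter (tau : (R -> Prop) -> Prop) (a : R) (V : R -> Prop) : Prop :=
  exists U, tau U /\ U a /\ (forall x, U x -> V x).

Definition Cset (tau : (R -> Prop) -> Prop) (a : R) : Prop :=
  ~ (forall V, nbhd_filter tau a V <-> nbhd_filter eta a V).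

Definition closure (tau : (R -> Prop) -> Prop) (A : R -> Prop) (x : R) : Prop :=
  forall U, tau U -> U x -> exists y, U y /\ A y.

Definition interior (tau : (R -> Prop) -> Prop) (A : R -> Prop) (x : R) : Prop :=
  exists U, tau U /\ U x /\ (forall y, U y -> A y).

Definition nowhere_dense (tau : (R -> Prop) -> Prop) (A : R -> Prop) : Prop :=
  forall x, ~ interior tau (closure tau A) x.

Definition meager (tau : (R -> Prop) -> Prop) (A : R -> Prop) : Prop :=
  exists B : nat -> R -> Prop,
    (forall n, nowhere_dense tau (B n)) /\
    (forall x, A x -> exists n, B n x).

Definition dense (tau : (R -> Prop) -> Prop) (D : R -> Prop) : Prop :=
  forall x, closure tau D x.

Definition baire_space (tau : (R -> Prop) -> Prop) : Prop :=
  forall G : nat -> R -> Prop,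
    (forall n, tau (G n) /\ dense tau (G n)) ->
    dense tau (fun x => forall n, G n x).

(* Since C(tau) is meager and the real line is a Baire space, the points where
   the tau- and Euclidean neighbourhood filters agree are Euclidean dense; at such
   a point every Euclidean neighbourhood is a tau-neighbourhood, so every tau-dense
   set is Euclidean dense.  Hence a sequence of tau-open tau-dense sets is a sequence
   of Euclidean open dense sets, whose intersection is Euclidean dense by Baire's
   theorem for R, and therefore tau-dense because tau is coarser.  Of the hypothesis
   tau \in L only the inclusion tau \subset eta is needed. *)
From Stdlib Require Import Reals Rtopology.
From mathcomp Require Import all_boot all_algebra.
From mathcomp Require Import all_classical all_reals all_analysis Rstruct Rstruct_topology.
(* Imported last so that [dense], [closure], [interior] and [eta] refer to Defs. *)
From Pilot Require Import Defs.
Import Num.Theory.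

Lemma open_setE (U : R -> Prop) : open_set U <-> open (U : set R^o).
Proof.
rewrite openE; split=> [HU x Ux | HU x Ux].
- have [[e e_gt0] xeU] := HU x Ux.
  apply/nbhs_ballP; exists e => /=; first exact/RltP.
  move=> y; rewrite /ball /= => xye; apply: xeU.
  by rewrite /disc /= RabsE distrC; apply/RltP.
- have /nbhs_ballP[e /= e_gt0 xeU] := HU x Ux.
  exists (mkposreal e (RltP e_gt0)) => y; rewrite /disc /= => xye.
  by apply: xeU; rewrite /ball /= distrC -RabsE; apply/RltP.
Qed.

Lemma dense_eta_dense (D : R -> Prop) :
  dense eta D -> topology_structure.dense (D : set R^o).
Proof.
move=> HD O [x Ox] /open_setE HO.
by have [y [Oy Dy]] := HD x O HO Ox; exists y.
Qed.

Lemma baire_space_eta : baire_space eta.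
Proof.
move=> G HG x U /open_setE HU Ux.
have /Baire /(_ U) :
    forall n, open (G n : set R^o) /\ topology_structure.dense (G n : set R^o).
  by move=> n; have [/open_setE oG /dense_eta_dense dG] := HG n.
by case=> [|//| y [Uy Gy]]; [exists x | exists y; split=> // n; apply: Gy].
Qed.

Lemma open_not_closure (B : R -> Prop) : eta (fun x => ~ closure eta B x).
Proof.
move=> x /existsNP[U /not_implyP[HU /not_implyP[Ux noB]]].
have [d xdU] := HU x Ux.
by exists d => y /xdU Uy clBy; apply: noB; apply: clBy.
Qed.

Lemma dense_not_closure {tau} {B : R -> Prop} :
  nowhere_dense tau B -> dense tau (fun x => ~ closure tau B x).
Proof.
move=> ndB x U tU Ux; apply: contrapT => noU.
apply: (ndB x); exists U; do 2!split=> //; move=> y Uy.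
by apply: contrapT => clBy; apply: noU; exists y.
Qed.

Lemma dense_not_meager {A : R -> Prop} : meager eta A -> dense eta (fun x => ~ A x).
Proof.
move=> [B [ndB AB]] x U HU Ux.
have [|y [Uy clBy]] := baire_space_eta (fun n y => ~ closure eta (B n) y) _ x U HU Ux.
  by move=> n; split; [apply: open_not_closure | apply: dense_not_closure].
exists y; split=> // /AB[n Bny].
by apply: (clBy n) => V _ Vy; exists y.
Qed.

Lemma dense_eta_of_dense {tau} {D : R -> Prop} :
  dense eta (fun c => ~ Cset tau c) -> dense tau D -> dense eta D.
Proof.
move=> denseC HD x U HU Ux.
have [c [Uc /contrapT nbhsE]] := denseC x U HU Ux.
have [|V [tV [Vc VU]]] := (nbhsE U).2; first by exists U.
by have [y [Vy Dy]] := HD c V tV Vc; exists y; split=> //; apply: VU.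
Qed.

Lemma dense_of_coarser {tau} {D : R -> Prop} :
  (forall U, tau U -> eta U) -> dense eta D -> dense tau D.
Proof. by move=> coarse HD x U /coarse; apply: HD. Qed.

Theorem proposition4 (tau : (R -> Prop) -> Prop) :
  in_L tau -> meager eta (Cset tau) -> baire_space tau.
Proof.
move=> [_ [_ coarse]] meagerC G HG.
apply: (dense_of_coarser coarse); apply: baire_space_eta => n.
have [tG dG] := HG n.
by split; [apply: coarse | apply: dense_eta_of_dense (dense_not_meager meagerC) dG].
Qed.
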